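(* Let $k$ be an algebraically closed field of characteristic $0$, let $A=k\langle x_1,\dots,x_n\rangle/(f_1,\dots,f_h)$ be a noetherian connected graded algebra, let $r\ge1$, $\xi$ a primitive $r$-th root of unity, integers $0<a_j\le r$, and let $G$ be the cyclic group of order $r$ generated by $g=\mathrm{diag}(\xi^{a_1},\dots,\xi^{a_n})$, acting on $A$ (and on $k\langle x_1,\dots,x_n\rangle$) by $g\cdot x_j=\xi^{a_j}x_j$. Then $A*G\cong kQ_G/I$, where $I$ is the two-sided ideal generated by the elements $\phi(f_j*\rho_i)$ for $1\le j\le h$ and $i\in\mathbb{Z}/r\mathbb{Z}$.
   Context: $\rho_i=\frac1r\sum_{p=0}^{r-1}\xi^{ip}g^p\in kG$. The McKay quiver $Q_G$ has vertices $\mathbb{Z}/r\mathbb{Z}$ and arrows $x_{j,i}:i-a_j\to i$ ($i\in\mathbb{Z}/r\mathbb{Z}$, $1\le j\le n$); paths in $kQ_G$ are multiplied by concatenation written left to right, and $e_i$ is the trivial path at $i$. $\phi:k\langle x_1,\dots,x_n\rangle*G\to kQ_G$ is the linear map with $\phi(1*\rho_i)=e_i$ and $\phi(x_{s_1}\cdots x_{s_m}*\rho_i)=x_{s_1,\,i-a_{s_m}-\cdots-a_{s_2}}\cdots x_{s_{m-1},\,i-a_{s_m}}x_{s_m,\,i}$ (it is an algebra isomorphism). The skew group algebra $R*G=R\otimes_kkG$ has multiplication $(a*h)(b*h')=ah(b)*hh'$. *)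

From HB Require Import structures.
From mathcomp Require Import all_boot all_order all_algebra.
From mathcomp Require Import finmap.
From mathcomp.multinomials Require Import monalg.

Set Implicit Arguments.
Unset Strict Implicit.
Unset Printing Implicit Defensive.

Import GRing.Theory.
Local Open Scope ring_scope.

Definition ideal_gen {T : zmodType} (mul : T -> T -> T) {J : Type}
  (gen : J -> T) (x : T) : Prop :=
  exists l : seq (T * J * T), x = \sum_(t <- l) mul (mul t.1.1 (gen t.1.2)) t.2.

Definition left_ideal {R : pzRingType} (I : R -> Prop) : Prop :=
  [/\ I 0, (forall x y, I x -> I y -> I (x + y)) & (forall a x, I x -> I (a * x))].

Definition right_ideal {R : pzRingType} (I : R -> Prop) : Prop :=
  [/\ I 0, (forall x y, I x -> I y -> I (x + y)) & (forall a x, I x -> I (x * a))].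

Definition acc_chain {R : Type} (P : (R -> Prop) -> Prop) : Prop :=
  forall I : nat -> R -> Prop, (forall m, P (I m)) ->
    (forall m x, I m x -> I m.+1 x) ->
    exists N, forall m, (N <= m)%N -> forall x, I m x <-> I N x.

Definition noetherian (R : pzRingType) : Prop :=
  acc_chain (@left_ideal R) /\ acc_chain (@right_ideal R).

(* The free algebra k<x_1,...,x_n>: monoid algebra of the free monoid *)
(* on 'I_n (words, multiplied by concatenation).                      *)
Definition freealg (k : fieldType) (n : nat) := {malg k[{fmonom 'I_n}]}.

Definition homogeneous (k : fieldType) (n : nat) (f : freealg k n) : Prop :=
  exists d : nat, forall w, w \in msupp f -> size (w : seq 'I_n) = d.

Definition wt (n : nat) (a : 'I_n -> nat) (w : seq 'I_n) : nat :=
  \sum_(s <- w) a s.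

Definition gact (k : fieldType) (n : nat) (a : 'I_n -> nat) (xi : k)
  (f : freealg k n) : freealg k n :=
  \sum_(w <- msupp f) << xi ^+ wt a (w : seq 'I_n) * f@_w *g w >>.

(* Skew group algebra B*G, G = <g> cyclic of order r, represented in  *)
(* the basis {g^p : p < r}: u : {ffun 'I_r -> B} stands for            *)
(* sum_p u p * g^p.  The action of g on B is sigma.                   *)
(* (b*h)(b'*h') = b h(b') * hh'.                                       *)
Definition skew_one (B : nzRingType) (r : nat) : {ffun 'I_r -> B} :=
  [ffun p : 'I_r => if val p == 0%N then 1 else 0].

Definition skew_mul (B : nzRingType) (r : nat) (sigma : B -> B)
  (u v : {ffun 'I_r -> B}) : {ffun 'I_r -> B} :=
  [ffun s : 'I_r => \sum_(p < r) \sum_(q < r | (p + q == s %[mod r])%N)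
                      u p * iter p sigma (v q)].

Definition skew_rho (k : fieldType) (B : lmodType k) (r : nat) (xi : k)
  (b : B) (i : 'I_r) : {ffun 'I_r -> B} :=
  [ffun p : 'I_r => ((r%:R)^-1 * xi ^+ (i * p)) *: b].

(* The path algebra kQ_G of the McKay quiver.  Vertices: Z/rZ = 'I_r. *)
(* Arrows x_{j,i} : i - a_j -> i.  A path (arrows concatenated left to *)
(* right) x_{s_1,i-a_{s_m}-...-a_{s_2}} ... x_{s_m,i} is encoded by    *)
(* the pair (i, [:: s_1; ...; s_m]) (its terminal vertex and its arrow *)
(* labels); this is a bijection onto the set of paths, the trivial     *)
(* path e_i being (i, [::]).  The source of (i, w) is i - wt w mod r.  *)
Definition qpath (r n : nat) := ('I_r * seq 'I_n)%type.

Definition qtgt (r n : nat) (u : qpath r n) : nat := u.1.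

(* u followed by v is a path iff tgt u = src v, i.e. tgt u + wt v = tgt v mod r *)
Definition qcomposable (r n : nat) (a : 'I_n -> nat) (u v : qpath r n) : bool :=
  (u.1 + wt a v.2 == v.1 %[mod r])%N.

Definition pathalg (k : fieldType) (r n : nat) := {malg k[qpath r n]}.

Definition pmul (k : fieldType) (r n : nat) (a : 'I_n -> nat)
  (x y : pathalg k r n) : pathalg k r n :=
  \sum_(u <- msupp x) \sum_(v <- msupp y)
     (if qcomposable a u v then << x@_u * y@_v *g (v.1, u.2 ++ v.2) >> else 0).

Definition pone (k : fieldType) (r n : nat) : pathalg k r n :=
  \sum_(i < r) << ((i, [::]) : qpath r n) >>.

(* e_i-path image of a word-polynomial: f |-> sum_w f_w (path (i,w)),  *)
(* i.e. phi(x_{s_1}...x_{s_m} * rho_i) = (i, [:: s_1; ...; s_m]).       *)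
Definition phi_rho (k : fieldType) (r n : nat) (i : 'I_r) (f : freealg k n)
  : pathalg k r n :=
  \sum_(w <- msupp f) << f@_w *g ((i, (w : seq 'I_n)) : qpath r n) >>.

(* phi : k<x>*G -> kQ_G, the linear map with phi(w * rho_i) = path (i,w). *)
(* Since g^p = sum_i xi^{-ip} rho_i, the rho_i-component of              *)
(* sum_p u_p * g^p is sum_p xi^{-ip} u_p.                                *)
Definition phi (k : fieldType) (r n : nat) (xi : k)
  (u : {ffun 'I_r -> freealg k n}) : pathalg k r n :=
  \sum_(i < r) phi_rho i (\sum_(p < r) (xi^-1 ^+ (i * p)) *: u p).

(* The isomorphism is psi = (pi * G) o phi^-1: it sends the path (i, w) to
   pi(w) * rho_i, so psi (phi u) is the image of u in A*G and psi is onto.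
   It is multiplicative because (w * rho_i)(w' * rho_j) vanishes unless
   i + wt w' = j mod r, in which case it is (w w') * rho_j; this is a
   geometric sum over the powers of xi.  For the kernel, write
   x = sum_i phi(b_i * rho_i) by grouping paths according to their terminal
   vertex; then psi x = sum_i pi(b_i) * rho_i, and as the rho_i are linearly
   independent, psi x = 0 forces every b_i into ker pi = (f_1, ..., f_h).
   Finally phi(c f d * rho_i) = phi(c * 1) phi(f * 1) phi(d * rho_i) with
   phi(f * 1) = sum_j phi(f * rho_j), which lies in I. *)

From HB Require Import structures.
From mathcomp Require Import all_boot all_order all_algebra.
From mathcomp Require Import finmap ring.
From mathcomp.multinomials Require Import monalg.

Set Implicit Arguments.
Unset Strict Implicit.
Unset Printing Implicit Defensive.

Import GRing.Theory.
Local Open Scope ring_scope.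

Arguments phi_rho : simpl never.

Section MonalgSum.
Variables (R : nzRingType) (K : choiceType) (V : lmodType R) (F : K -> R -> V).
Hypothesis F_linear : forall u c x y, F u (c * x + y) = c *: F u x + F u y.

Definition msum (x : {malg R[K]}) : V := \sum_(u <- msupp x) F u x@_u.

Lemma msum_coef0 u : F u 0 = 0.
Proof.
have := F_linear u 1 0 0; rewrite mul1r addr0 scale1r.
by move/(congr1 (fun v => v - F u 0)); rewrite subrr addrK.
Qed.

Lemma msumEw (d : {fset K}) x :
  (msupp x `<=` d)%fset -> msum x = \sum_(u <- d) F u x@_u.
Proof. by move=> le; apply: big_fset_incl => // u _ /mcoeff_outdom ->; apply: msum_coef0. Qed.

Lemma msumU c u : msum << c *g u >> = F u c.
Proof. by rewrite (msumEw msuppU_le) big_seq_fset1 mcoeffUU. Qed.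

Lemma msum_linear : linear msum.
Proof.
move=> c x y; pose d := (msupp (c *: x + y) `|` msupp x `|` msupp y)%fset.
have le_xy : (msupp (c *: x + y) `<=` d)%fset by rewrite /d -fsetUA fsubsetUl.
have le_x : (msupp x `<=` d)%fset by rewrite /d fsubsetU // fsubsetUr.
have le_y : (msupp y `<=` d)%fset by rewrite /d fsubsetUr.
rewrite (msumEw le_xy) (msumEw le_x) (msumEw le_y) scaler_sumr -big_split; apply: eq_bigr => u _.
by rewrite mcoeffD mcoeffZ F_linear.
Qed.

Lemma msumD : {morph msum : x y / x + y}.
Proof. by move=> x y; have := msum_linear 1 x y; rewrite !scale1r. Qed.
End MonalgSum.

Lemma monalgUZ (K : choiceType) (R : nzRingType) (c z : R) (u : K) :
  << c * z *g u >> = c *: << z *g u >>.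
Proof. by apply/malgP => v; rewrite mcoeffZ !mcoeffU mulrnAr. Qed.

Lemma ord_addn_mod_unique (r : nat) (r_gt0 : (0 < r)%N) (m j : nat) :
  exists q0 : 'I_r, forall q : 'I_r, (q + m == j %[mod r])%N = (q == q0).
Proof.
exists (Ordinal (ltn_pmod (j + (r - m %% r)) r_gt0)) => q.
rewrite -modnDmr -(eqn_modDr (r - m %% r)) -addnA subnKC; last first.
  exact: ltnW (ltn_pmod _ r_gt0).
by rewrite modnDr -val_eqE /= modn_small.
Qed.

Section PrimitiveRootSums.
Variables (k : fieldType) (r : nat) (xi : k) (xi_prim : r.-primitive_root xi).

Lemma prim_root_neq0 : xi != 0.
Proof. by rewrite (prim_root_eq0 xi_prim) -lt0n (prim_order_gt0 xi_prim). Qed.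

Lemma sum_expr_unity_root (z : k) : z ^+ r = 1 ->
  \sum_(i < r) z ^+ i = if z == 1 then r%:R else 0.
Proof.
move=> zr; case: eqP => [->|nz1].
  by under eq_bigr do rewrite expr1n; rewrite sumr_const card_ord.
have := subrX1 z r; rewrite zr subrr => /esym/eqP; rewrite mulf_eq0 subr_eq0.
by case/orP=> /eqP // /nz1.
Qed.

Lemma sum_prim_root_ratio (i j : nat) :
  \sum_(p < r) (xi ^+ i / xi ^+ j) ^+ p = if (i == j %[mod r])%N then r%:R else 0.
Proof.
have xi_order := prim_expr_order xi_prim.
rewrite sum_expr_unity_root; last first.
  by rewrite exprMn exprVn -!exprM [(i * r)%N]mulnC [(j * r)%N]mulnC !exprM xi_order
    !expr1n invr1 mulr1.
have xij0 : xi ^+ j != 0 by rewrite expf_neq0 // prim_root_neq0.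
by rewrite -[_ / _ == 1](inj_eq (mulIf xij0)) divfK // mul1r (eq_prim_root_expr xi_prim).
Qed.

Lemma sum_prim_root_orth (i j : 'I_r) :
  \sum_(p < r) xi ^+ (i * p) * xi^-1 ^+ (j * p) = (i == j)%:R * r%:R.
Proof.
transitivity (\sum_(p < r) (xi ^+ i / xi ^+ j) ^+ p).
  by apply: eq_bigr => p _; rewrite exprMn !exprM exprVn -exprVn.
by rewrite sum_prim_root_ratio !modn_small // val_eqE; case: (i == j); rewrite ?mul1r ?mul0r.
Qed.

Lemma sum_prim_root_orth_dual (p q : 'I_r) :
  \sum_(i < r) xi ^+ (i * p) * xi^-1 ^+ (i * q) = (p == q)%:R * r%:R.
Proof. by rewrite -sum_prim_root_orth; apply: eq_bigr => i _; rewrite !(mulnC i). Qed.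
End PrimitiveRootSums.

Section SkewRho.
Variables (k : fieldType) (r : nat) (xi : k) (xi_prim : r.-primitive_root xi).
Variable B : lmodType k.

Lemma skew_rho_coord (b : B) (i j : 'I_r) :
  \sum_(p < r) xi^-1 ^+ (j * p) *: skew_rho xi b i p = (i == j)%:R *: b.
Proof.
rewrite -[(i == j)%:R](mulfK (prim_root_natf_neq0 xi_prim)).
rewrite -(sum_prim_root_orth xi_prim) mulr_suml scaler_suml; apply: eq_bigr => p _.
by rewrite ffunE scalerA; congr (_ *: _); ring.
Qed.

Lemma skew_rho_sum_eq0 (y : 'I_r -> B) :
  \sum_(i < r) skew_rho xi (y i) i = 0 -> forall j, y j = 0.
Proof.
move=> y0 j; transitivity (\sum_(p < r) xi^-1 ^+ (j * p) *: (\sum_(i < r) skew_rho xi (y i) i) p).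
  under eq_bigr do rewrite sum_ffunE scaler_sumr.
  rewrite exchange_big (bigD1 j) //= skew_rho_coord eqxx scale1r big1 ?addr0 //.
  by move=> i /negPf ji; rewrite skew_rho_coord ji scale0r.
by rewrite y0 big1 // => p _; rewrite ffunE scaler0.
Qed.
End SkewRho.

Section IdealGen.
Variables (T : zmodType) (mul : T -> T -> T) (J : Type) (gen : J -> T).

Lemma ideal_gen0 : ideal_gen mul gen 0.
Proof. by exists [::]; rewrite big_nil. Qed.

Lemma ideal_genD x y :
  ideal_gen mul gen x -> ideal_gen mul gen y -> ideal_gen mul gen (x + y).
Proof. by move=> [l1 ->] [l2 ->]; exists (l1 ++ l2); rewrite big_cat. Qed.

Lemma ideal_gen_sum (I : Type) (l : seq I) (F : I -> T) :
  (forall i, ideal_gen mul gen (F i)) -> ideal_gen mul gen (\sum_(i <- l) F i).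
Proof.
move=> IF; elim: l => [|i l IHl]; first by rewrite big_nil; apply: ideal_gen0.
by rewrite big_cons; apply: ideal_genD.
Qed.

Lemma ideal_gen_mem b j c : ideal_gen mul gen (mul (mul b (gen j)) c).
Proof. by exists [:: (b, j, c)]; rewrite big_seq1. Qed.

Lemma eq_ideal_gen (gen' : J -> T) x :
  gen =1 gen' -> ideal_gen mul gen x -> ideal_gen mul gen' x.
Proof. by move=> eq_gen [l ->]; exists l; apply: eq_bigr => t _; rewrite eq_gen. Qed.
End IdealGen.

Section SkewMul.
Variables (R : pzRingType) (A : algType R) (r : nat) (sigma : A -> A).
Hypothesis sigma_linear : linear sigma.

Definition iter_sigma p := iter p sigma.

Lemma iter_sigma_linear p : linear (iter_sigma p).
Proof. by elim: p => [//|p IHp] c x y; rewrite /= -/(iter_sigma p) IHp sigma_linear. Qed.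

HB.instance Definition _ p :=
  GRing.isLinear.Build R A A *:%R (iter_sigma p) (iter_sigma_linear p).

Local Notation smul := (@skew_mul A r sigma).

Lemma skew_mul_suml (I : Type) (l : seq I) (F : I -> {ffun 'I_r -> A}) v :
  smul (\sum_(i <- l) F i) v = \sum_(i <- l) smul (F i) v.
Proof.
apply/ffunP => s; rewrite sum_ffunE ffunE; under [RHS]eq_bigr do rewrite ffunE.
rewrite exchange_big; apply: eq_bigr => p _; rewrite exchange_big.
by apply: eq_bigr => q _; rewrite sum_ffunE mulr_suml.
Qed.

Lemma skew_mul_sumr (I : Type) (l : seq I) (F : I -> {ffun 'I_r -> A}) u :
  smul u (\sum_(i <- l) F i) = \sum_(i <- l) smul u (F i).
Proof.
apply/ffunP => s; rewrite sum_ffunE ffunE; under [RHS]eq_bigr do rewrite ffunE.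
rewrite exchange_big; apply: eq_bigr => p _; rewrite exchange_big.
apply: eq_bigr => q _; rewrite sum_ffunE.
by rewrite -/(iter_sigma p) raddf_sum mulr_sumr.
Qed.

Lemma skew_mulZl c u v : smul (c *: u) v = c *: smul u v.
Proof.
apply/ffunP => s; rewrite !ffunE scaler_sumr; apply: eq_bigr => p _.
by rewrite scaler_sumr; apply: eq_bigr => q _; rewrite ffunE scalerAl.
Qed.

Lemma skew_mulZr c u v : smul u (c *: v) = c *: smul u v.
Proof.
apply/ffunP => s; rewrite !ffunE scaler_sumr; apply: eq_bigr => p _.
rewrite scaler_sumr; apply: eq_bigr => q _; rewrite ffunE.
by rewrite -/(iter_sigma p) linearZ /= scalerAr.
Qed.

Lemma skew_mul0l u : smul 0 u = 0.
Proof. by rewrite -[X in smul X _](scale0r (0 : {ffun 'I_r -> A})) skew_mulZl scale0r. Qed.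

Lemma skew_mul0r u : smul u 0 = 0.
Proof. by rewrite -[X in smul _ X](scale0r (0 : {ffun 'I_r -> A})) skew_mulZr scale0r. Qed.
End SkewMul.

Section FreeAlgebra.
Variables (k : fieldType) (n : nat) (a : 'I_n -> nat) (xi : k).
Local Notation W := (freealg k n).

Definition word (s : seq 'I_n) : W := << (FMonom s : {fmonom 'I_n}) >>.

Lemma word_cat s t : word s * word t = word (s ++ t).
Proof.
rewrite /word malgM_def fgmulUU mulr1; congr << _ *g _ >>.
by apply: val_inj; rewrite /= fmM.
Qed.

Let gact_coef_linear (w : {fmonom 'I_n}) (c x y : k) :
  << xi ^+ wt a w * (c * x + y) *g w >> =
  c *: << xi ^+ wt a w * x *g w >> + << xi ^+ wt a w * y *g w >>.
Proof. by rewrite mulrDr monalgUD mulrCA monalgUZ. Qed.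

Lemma gact_linear : linear (gact a xi).
Proof. exact: (msum_linear gact_coef_linear). Qed.

Lemma gactU c (w : {fmonom 'I_n}) :
  gact a xi << c *g w >> = << xi ^+ wt a w * c *g w >>.
Proof. exact: (msumU gact_coef_linear). Qed.

Lemma iter_gactU p c (w : {fmonom 'I_n}) :
  iter p (gact a xi) << c *g w >> = << xi ^+ (p * wt a w) * c *g w >>.
Proof.
elim: p => [|p IHp] /=; first by rewrite mul0n expr0 mul1r.
by rewrite IHp gactU mulrA -exprD mulSn.
Qed.
End FreeAlgebra.

Arguments word {k n} s.

Section PathAlgebra.
Variables (k : fieldType) (r n : nat) (a : 'I_n -> nat).
Local Notation W := (freealg k n).
Local Notation K := (qpath r n).
Local Notation P := (pathalg k r n).

Definition pmul_term (u v : K) (c : k) : P :=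
  if qcomposable a u v then << c *g ((v.1, u.2 ++ v.2) : K) >> else 0.

Lemma pmul_term0 u v : pmul_term u v 0 = 0.
Proof. by rewrite /pmul_term monalgU0; case: (qcomposable a u v). Qed.

Lemma pmul_term_linear u v c x y :
  pmul_term u v (c * x + y) = c *: pmul_term u v x + pmul_term u v y.
Proof.
rewrite /pmul_term; case: (qcomposable a u v); last by rewrite scaler0 addr0.
by rewrite monalgUD monalgUZ.
Qed.

Lemma pmulE (x y : P) :
  pmul a x y = \sum_(u <- msupp x) \sum_(v <- msupp y) pmul_term u v (x@_u * y@_v).
Proof. by []. Qed.

Lemma pmulEr (x y : P) :
  pmul a x y = \sum_(v <- msupp y) \sum_(u <- msupp x) pmul_term u v (x@_u * y@_v).
Proof. exact: exchange_big. Qed.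

Lemma pmulDl (y : P) : {morph pmul a ^~ y : x x' / x + x'}.
Proof.
apply: (@msumD _ _ _ (fun u c => \sum_(v <- msupp y) pmul_term u v (c * y@_v))).
move=> u c x x'; rewrite scaler_sumr -big_split; apply: eq_bigr => v _.
by rewrite mulrDl -mulrA pmul_term_linear.
Qed.

Lemma pmulDr (x : P) : {morph pmul a x : y y' / y + y'}.
Proof.
move=> y y'; rewrite !pmulEr.
apply: (@msumD _ _ _ (fun v c => \sum_(u <- msupp x) pmul_term u v (x@_u * c))).
move=> v c z z'; rewrite scaler_sumr -big_split; apply: eq_bigr => u _.
by rewrite mulrDr mulrCA pmul_term_linear.
Qed.

Lemma pmul0l (y : P) : pmul a 0 y = 0.
Proof. by rewrite pmulE msupp0 big_seq_fset0. Qed.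

Lemma pmul0r (x : P) : pmul a x 0 = 0.
Proof. by rewrite pmulE big1 // => u _; rewrite msupp0 big_seq_fset0. Qed.

Lemma pmul_suml (I : Type) (l : seq I) (F : I -> P) y :
  pmul a (\sum_(i <- l) F i) y = \sum_(i <- l) pmul a (F i) y.
Proof. exact: (big_morph _ (pmulDl y) (pmul0l y)). Qed.

Lemma pmul_sumr (I : Type) (l : seq I) (F : I -> P) x :
  pmul a x (\sum_(i <- l) F i) = \sum_(i <- l) pmul a x (F i).
Proof. exact: (big_morph _ (pmulDr x) (pmul0r x)). Qed.

Lemma pmulU c c' u v : pmul a << c *g u >> << c' *g v >> = pmul_term u v (c * c').
Proof.
have [->|c0] := eqVneq c 0; first by rewrite monalgU0 pmul0l mul0r pmul_term0.
have [->|c'0] := eqVneq c' 0; first by rewrite monalgU0 pmul0r mulr0 pmul_term0.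
by rewrite pmulE !msuppU (negPf c0) (negPf c'0) !big_seq_fset1 !mcoeffUU.
Qed.

Let phi_rho_coef_linear (i : 'I_r) (w : {fmonom 'I_n}) (c x y : k) :
  << c * x + y *g ((i, (w : seq 'I_n)) : K) >> =
  c *: << x *g ((i, (w : seq 'I_n)) : K) >> + << y *g ((i, (w : seq 'I_n)) : K) >>.
Proof. by rewrite monalgUD monalgUZ. Qed.

Lemma phi_rho_linear i : linear (@phi_rho k r n i).
Proof. exact: (msum_linear (phi_rho_coef_linear i)). Qed.

HB.instance Definition _ i :=
  GRing.isLinear.Build k W P *:%R (@phi_rho k r n i) (phi_rho_linear i).

Lemma phi_rhoU i (c : k) (w : {fmonom 'I_n}) :
  phi_rho i << c *g w >> = << c *g ((i, (w : seq 'I_n)) : K) >>.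
Proof. exact: (msumU (phi_rho_coef_linear i)). Qed.

Definition tgt_part (x : P) (i : 'I_r) : W :=
  \sum_(u <- msupp x) (if u.1 == i then << x@_u *g (FMonom u.2 : {fmonom 'I_n}) >> else 0).

Lemma tgt_part_decomp x : x = \sum_(i < r) phi_rho i (tgt_part x i).
Proof.
rewrite [LHS]monalgE; under [RHS]eq_bigr do rewrite /tgt_part raddf_sum.
rewrite exchange_big /=; apply: eq_bigr => u _.
rewrite (bigD1 u.1) //= eqxx phi_rhoU big1 ?addr0; first by case: u.
by move=> i /negPf; rewrite eq_sym => ->; rewrite raddf0.
Qed.

Hypothesis r_gt0 : (0 < r)%N.

Lemma phi_rho_mulU j (c c' : k) (w w' : {fmonom 'I_n}) :
  phi_rho j (<< c *g w >> * << c' *g w' >>) =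
  pmul a (\sum_(i < r) phi_rho i << c *g w >>) (phi_rho j << c' *g w' >>).
Proof.
rewrite malgM_def fgmulUU !phi_rhoU pmul_suml.
under eq_bigr do rewrite phi_rhoU pmulU.
have [i0 Hi0] := ord_addn_mod_unique r_gt0 (wt a w') j.
rewrite (bigD1 i0) //= big1 ?addr0 => [|i /negPf].
  by rewrite /pmul_term /qcomposable /= Hi0 eqxx fmM.
by rewrite /pmul_term /qcomposable /= Hi0 => ->.
Qed.

Lemma phi_rho_mul j (c d : W) :
  phi_rho j (c * d) = pmul a (\sum_(i < r) phi_rho i c) (phi_rho j d).
Proof.
have expand (i : 'I_r) (b : W) : phi_rho i b = \sum_(w <- msupp b) phi_rho i << b@_w *g w >>.
  by rewrite [b in LHS]monalgE raddf_sum.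
rewrite [c in LHS]monalgE [d in LHS]monalgE mulr_suml raddf_sum.
rewrite (eq_bigr _ (fun i _ => expand i c)) exchange_big pmul_suml.
apply: eq_bigr => w _; rewrite mulr_sumr raddf_sum (expand j d) pmul_sumr.
by apply: eq_bigr => w' _; apply: phi_rho_mulU.
Qed.

Lemma ideal_gen_phi_rho (h : nat) (f : 'I_h -> W) j b :
  ideal_gen *%R f b ->
  ideal_gen (pmul a) (fun t : 'I_h * 'I_r => phi_rho t.2 (f t.1)) (phi_rho j b).
Proof.
move=> [l ->]; rewrite raddf_sum; apply: ideal_gen_sum => -[[c t] d] /=.
rewrite phi_rho_mul; under eq_bigr do rewrite phi_rho_mul.
rewrite pmul_suml; apply: ideal_gen_sum => i.
exact: (ideal_gen_mem _ _ _ (t, i)).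
Qed.
End PathAlgebra.

Section Psi.
Variables (k : fieldType) (n r : nat) (a : 'I_n -> nat).
Variables (xi : k) (xi_prim : r.-primitive_root xi).
Variables (A : algType k) (pi : {lrmorphism freealg k n -> A}) (sigma : A -> A).
Hypothesis pi_surj : forall y : A, exists x, pi x = y.
Hypothesis sigma_def : forall x, sigma (pi x) = pi (gact a xi x).

Local Notation W := (freealg k n).
Local Notation K := (qpath r n).
Local Notation P := (pathalg k r n).

Lemma phi_skew_rho (b : W) (i : 'I_r) : phi xi (skew_rho xi b i) = phi_rho i b.
Proof.
rewrite /phi (bigD1 i) //= skew_rho_coord // eqxx scale1r big1 ?addr0 //.
by move=> j /negPf ij; rewrite skew_rho_coord // eq_sym ij scale0r raddf0.
Qed.

Definition psi_basis (u : K) : {ffun 'I_r -> A} := skew_rho xi (pi (word u.2)) u.1.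

Definition psi : P -> {ffun 'I_r -> A} := msum (fun u c => c *: psi_basis u).

Let psi_coef_linear (u : K) c x y :
  (c * x + y) *: psi_basis u = c *: (x *: psi_basis u) + y *: psi_basis u.
Proof. by rewrite scalerDl scalerA. Qed.

Lemma psi_linear : linear psi.
Proof. exact: (msum_linear psi_coef_linear). Qed.

HB.instance Definition _ := GRing.isLinear.Build k P {ffun 'I_r -> A} *:%R psi psi_linear.

Arguments psi : simpl never.

Lemma psiE x : psi x = \sum_(u <- msupp x) x@_u *: psi_basis u.
Proof. by []. Qed.

Lemma psiU c u : psi << c *g u >> = c *: psi_basis u.
Proof. exact: (msumU psi_coef_linear). Qed.

Lemma psi_phi_rho i b : psi (phi_rho i b) = skew_rho xi (pi b) i.
Proof.
apply/ffunP => p; rewrite /phi_rho raddf_sum sum_ffunE [b in RHS]monalgE ffunE.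
rewrite raddf_sum scaler_sumr; apply: eq_bigr => w _ /=.
rewrite psiU !ffunE /word /= fmK -[b@_w in RHS]mulr1 monalgUZ.
by rewrite [in RHS]linearZZ !scalerA mulrC.
Qed.

Lemma psi_phi (u : {ffun 'I_r -> W}) : psi (phi xi u) = [ffun p => pi (u p)].
Proof.
apply/ffunP => p; rewrite raddf_sum sum_ffunE ffunE.
transitivity (\sum_(i < r) \sum_(q < r)
    (r%:R^-1 * (xi ^+ (i * p) * xi^-1 ^+ (i * q))) *: pi (u q)).
  apply: eq_bigr => i _ /=; rewrite psi_phi_rho ffunE raddf_sum scaler_sumr.
  by apply: eq_bigr => q _; rewrite /= linearZZ scalerA mulrA.
rewrite exchange_big.
under eq_bigr do rewrite -scaler_suml -mulr_sumr (sum_prim_root_orth_dual xi_prim).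
have r0 := prim_root_natf_neq0 xi_prim.
rewrite (bigD1 p) //= eqxx mul1r mulVf // scale1r.
by rewrite big1 ?addr0 // => q /negPf qp; rewrite eq_sym qp mul0r mulr0 scale0r.
Qed.

Lemma pone_phi : pone k r n = phi xi (skew_one W r).
Proof.
have r_gt0 := prim_order_gt0 xi_prim.
apply: eq_bigr => i _; rewrite (bigD1 (Ordinal r_gt0)) //= ffunE /= muln0 expr0 scale1r.
rewrite big1 ?addr0 => [|p]; first by rewrite -mpolyC1E phi_rhoU fm1.
by rewrite -val_eqE /= ffunE => /negPf ->; rewrite scaler0.
Qed.

Lemma sigma_linear : linear sigma.
Proof.
move=> c y1 y2; case: (pi_surj y1) => x1 <-; case: (pi_surj y2) => x2 <-.
by rewrite -linearP !sigma_def gact_linear linearP.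
Qed.

Lemma iter_sigma_pi p x : iter p sigma (pi x) = pi (iter p (gact a xi) x).
Proof. by elim: p => [//|p IHp] /=; rewrite IHp sigma_def. Qed.

Lemma skew_mul_psi_basis_coef (u v : K) (s : 'I_r) :
  skew_mul sigma (psi_basis u) (psi_basis v) s =
  (\sum_(p < r) \sum_(q < r | (p + q == s %[mod r])%N)
     r%:R^-1 * xi ^+ (u.1 * p) * (xi ^+ (p * wt a v.2) * (r%:R^-1 * xi ^+ (v.1 * q))))
  *: pi (word (u.2 ++ v.2)).
Proof.
rewrite ffunE scaler_suml; apply: eq_bigr => p _; rewrite scaler_suml.
apply: eq_bigr => q _; rewrite /psi_basis !ffunE; set cv := _ * xi ^+ (v.1 * q).
have -> : cv *: pi (word v.2) = pi << cv *g FMonom v.2 >>.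
  by rewrite -[cv in RHS]mulr1 monalgUZ linearZZ.
rewrite iter_sigma_pi iter_gactU -[_ * cv]mulr1 monalgUZ linearZZ.
by rewrite -scalerAl -scalerAr scalerA -rmorphM word_cat mulr1.
Qed.

Lemma sum_skew_mul_coef (u v : K) (s : 'I_r) :
  \sum_(p < r) \sum_(q < r | (p + q == s %[mod r])%N)
     r%:R^-1 * xi ^+ (u.1 * p) * (xi ^+ (p * wt a v.2) * (r%:R^-1 * xi ^+ (v.1 * q)))
  = if qcomposable a u v then r%:R^-1 * xi ^+ (v.1 * s) else 0.
Proof.
have xi0 := prim_root_neq0 xi_prim; have r_gt0 := prim_order_gt0 xi_prim.
(* Solving for q = s - p leaves a geometric sum in xi ^+ (u.1 + wt v.2 - v.1). *)
transitivity (\sum_(p < r) r%:R^-1 * r%:R^-1 * xi ^+ (v.1 * s) *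
                 (xi ^+ (u.1 + wt a v.2) / xi ^+ v.1) ^+ p).
  apply: eq_bigr => p _.
  have [q0 Hq0] := ord_addn_mod_unique r_gt0 p s.
  rewrite (eq_bigl (pred1 q0)) => [|q]; last by rewrite addnC Hq0.
  rewrite big_pred1_eq.
  have -> : xi ^+ (v.1 * q0) = xi ^+ (v.1 * s) / xi ^+ (v.1 * p).
    apply: (canRL (mulfK (expf_neq0 _ xi0))); rewrite -exprD -mulnDr.
    apply/eqP; rewrite (eq_prim_root_expr xi_prim) -modnMmr.
    by move: (Hq0 q0); rewrite eqxx => /eqP ->; rewrite modnMmr.
  rewrite exprMn exprVn -!exprM mulnDl exprD !(mulnC p).
  ring.
rewrite -mulr_sumr sum_prim_root_ratio // /qcomposable.
case: (_ == _ %[mod r])%N; last by rewrite mulr0.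
by field; apply: prim_root_natf_neq0 xi_prim.
Qed.

Lemma skew_mul_psi_basis (u v : K) :
  skew_mul sigma (psi_basis u) (psi_basis v) =
  if qcomposable a u v then psi_basis ((v.1, u.2 ++ v.2) : K) else 0.
Proof.
apply/ffunP => s; rewrite skew_mul_psi_basis_coef sum_skew_mul_coef.
by case: (qcomposable a u v); rewrite !ffunE ?scale0r.
Qed.

Lemma psi_pmul_term u v c :
  psi (pmul_term a u v c) = c *: skew_mul sigma (psi_basis u) (psi_basis v).
Proof.
rewrite skew_mul_psi_basis /pmul_term; case: (qcomposable a u v); first exact: psiU.
by rewrite raddf0 scaler0.
Qed.

Lemma psi_mul x y : psi (pmul a x y) = skew_mul sigma (psi x) (psi y).
Proof.
rewrite pmulE raddf_sum [psi x]psiE skew_mul_suml; apply: eq_bigr => u _.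
rewrite raddf_sum [psi y]psiE skew_mulZl (skew_mul_sumr sigma_linear) scaler_sumr.
apply: eq_bigr => v _ /=.
by rewrite (skew_mulZr sigma_linear) scalerA psi_pmul_term.
Qed.

Lemma psi_ideal_gen0 (J : Type) (gen : J -> P) x :
  (forall j, psi (gen j) = 0) -> ideal_gen (pmul a) gen x -> psi x = 0.
Proof.
move=> gen0 [l ->]; rewrite raddf_sum big1 // => t _ /=.
by rewrite !psi_mul gen0 (skew_mul0r sigma_linear) skew_mul0l.
Qed.

Lemma psi_eq0_tgt_part x : psi x = 0 -> forall i, pi (tgt_part x i) = 0.
Proof.
move=> psi0; apply: (skew_rho_sum_eq0 xi_prim); rewrite -[RHS]psi0 [x in RHS]tgt_part_decomp.
by rewrite [in RHS]raddf_sum; apply: eq_bigr => i _ /=; rewrite psi_phi_rho.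
Qed.
End Psi.

Theorem theorem5p3
  (k : closedFieldType) (k_char0 : [pchar k] =i pred0)
  (n h : nat) (f : 'I_h -> freealg k n)
  (A : algType k) (pi : {lrmorphism freealg k n -> A})
  (pi_surj : forall y : A, exists x, pi x = y)
  (pi_ker : forall x, pi x = 0 <-> ideal_gen *%R f x)
  (f_homog : forall j, homogeneous (f j))
  (A_noeth : noetherian A)
  (r : nat) (r_gt0 : (0 < r)%N) (xi : k) (xi_prim : r.-primitive_root xi)
  (a : 'I_n -> nat) (a_range : forall j, (0 < a j <= r)%N)
  (g_order : forall p, (0 < p < r)%N -> exists j, xi ^+ (a j * p) != 1)
  (sigma : A -> A) (sigma_def : forall x, sigma (pi x) = pi (gact a xi x)) :
  exists psi : {linear pathalg k r n -> {ffun 'I_r -> A}},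
    [/\ psi (pone k r n) = skew_one A r,
        (forall x y, psi (pmul a x y) = skew_mul sigma (psi x) (psi y)),
        (forall y, exists x, psi x = y) &
        (forall x, psi x = 0 <->
           ideal_gen (pmul a)
             (fun t : 'I_h * 'I_r => phi xi (skew_rho xi (f t.1) t.2)) x)].
Proof.
have gen_phi_rho (t : 'I_h * 'I_r) : phi_rho t.2 (f t.1) = phi xi (skew_rho xi (f t.1) t.2).
  by rewrite (phi_skew_rho xi_prim).
exists (psi xi pi); split.
- rewrite /= (pone_phi n xi_prim) (psi_phi xi_prim); apply/ffunP => p.
  by rewrite !ffunE; case: eqP; rewrite ?rmorph1 ?raddf0.
- exact: (psi_mul xi_prim pi_surj sigma_def).
- move=> y; have [u piu] := fin_all_exists (fun p => pi_surj (y p)).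
  exists (phi xi [ffun p => u p]); rewrite /= (psi_phi xi_prim).
  by apply/ffunP => p; rewrite !ffunE.
move=> x; split=> [psi0|]; last first.
  apply: (psi_ideal_gen0 xi_prim pi_surj sigma_def) => t.
  rewrite -gen_phi_rho psi_phi_rho; apply/ffunP => p; rewrite !ffunE.
  have /pi_ker -> : ideal_gen *%R f (f t.1).
    by exists [:: (1, t.1, 1)]; rewrite big_seq1 mul1r mulr1.
  by rewrite scaler0.
rewrite (tgt_part_decomp x); apply: ideal_gen_sum => i.
apply: eq_ideal_gen gen_phi_rho _; apply: (ideal_gen_phi_rho a r_gt0).
exact/pi_ker/(psi_eq0_tgt_part xi_prim).
Qed.
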